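(* Let $F$ be a field of characteristic zero, let $A$ be $F[x,y]$ or $F_0[x,y]$, and let $r\ge0$, $c\ge\nu(0)$ be integers. Let $R$ be a Rota–Baxter operator of weight zero on $A$ defined by $R(x^ny^m)=\alpha_{n,m}y^{m+rn+c}$ with $\alpha_{n,m}\in F$, for all $n,m\ge0$ with $n+m\ge\nu(0)$. a) If $r=c=0$, then on $F[x,y]$ we have $R=0$, and on $F_0[x,y]$ there exists $k>0$ such that $\alpha_{0,k}\ne0$ and for all $n+m\ge1$: $$\alpha_{n,m}=\begin{cases}\alpha_{0,k}/a, & n=0,\ m=ak,\ a\ge1,\\ 0,&\text{otherwise}.\end{cases}$$ b) If $r+c>0$, then there exist a set $I\subseteq\mathbb{N}$, an integer $\Delta$, and integers $\{k_i\}_{i\in I}$ with $\alpha_{i,k_i}\ne0$, $\nu(i)\le k_i$, $k_i-\nu(0)<\Delta\le k_i+ri+c$ and $\Delta\mid k_i+ri+c$ for all $i\in I$, such that for all $l,t\ge0$ with $l+t\ge\nu(0)$: $$\alpha_{l,t}=\begin{cases}\dfrac{(k_l+rl+c)\,\alpha_{l,k_l}}{k_l+rl+c+\Delta s}, & l\in I,\ t=k_l+\Delta s,\ s\ge0,\\ 0,&\text{otherwise}.\end{cases}$$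
   Context: $\mathbb{N}$ includes $0$. $F_0[x,y]$ is the ideal of $F[x,y]$ generated by $x,y$ (spanned by monomials $x^ny^m$ with $n+m\ge1$). The function $\nu$ depends on the algebra: for $F[x,y]$, $\nu(n)=0$ for all $n$; for $F_0[x,y]$, $\nu(0)=1$ and $\nu(n)=0$ for $n>0$. A linear operator $R$ on an algebra $A$ is a Rota–Baxter operator of weight zero if $R(a)R(b)=R(R(a)b+aR(b))$ for all $a,b\in A$. *)

(* F[x,y] is modelled as {poly {poly F}}:
   x is the outer variable 'X, y is the constant polynomial ('X)%:P. *)
From HB Require Import structures.
From mathcomp Require Import all_boot all_order all_algebra.
Set Implicit Arguments. Unset Strict Implicit. Unset Printing Implicit Defensive.
Import Order.TTheory GRing.Theory Num.Theory.
Local Open Scope ring_scope.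

Definition xy (F : fieldType) (n m : nat) : {poly {poly F}} :=
  'X^n * ('X^m)%:P.

(* Membership in F_0[x,y] = ideal (x,y): zero constant term. *)
Definition in_F0 (F : fieldType) (p : {poly {poly F}}) : bool :=
  (p`_0)`_0 == 0.

(* The algebra A: [zero = false] means A = F[x,y], [zero = true] means A = F_0[x,y]. *)
Definition inA (F : fieldType) (zero : bool) (p : {poly {poly F}}) : bool :=
  if zero then in_F0 p else true.

Definition nu (zero : bool) (n : nat) : nat := (zero && (n == 0%N))%N.

(* Write N(n,m) = m + r n + c for the y-degree of R(x^n y^m).  Applying the
   Rota-Baxter identity to x^n y^m and x^l y^t and comparing coefficients gives
     a(n,m) a(l,t) = a(n,m) a(l, t + N(n,m)) + a(l,t) a(n, m + N(l,t)).
   Inside a row l this says that 1/a(l, t + t' + rl + c) = 1/a(l,t) + 1/a(l,t')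
   when both entries are nonzero, and that a zero entry and a nonzero entry
   produce a zero entry.  Hence the support of a nonzero row is the arithmetic
   progression k_l + Delta N starting at its first nonzero entry, Delta divides
   N(l, k_l), and 1/a is affine along it, which yields the closed formula.
   Taking n, m in one row and l, t in another, the identity shows that the step
   of row l divides N(n,m) whenever a(n,m) <> 0, so all rows share one step.
   When r = c = 0 on F[x,y], the row equation at t = t' = 0 kills a(n,0), and
   then the identity with t = 0 kills every a(n,m). *)

From HB Require Import structures.
From mathcomp Require Import all_boot all_order all_algebra.
From mathcomp Require Import zify ring.
From Stdlib Require Import ClassicalEpsilon.
Import Order.TTheory GRing.Theory Num.Theory.
Set Implicit Arguments. Unset Strict Implicit. Unset Printing Implicit Defensive.
Local Open Scope ring_scope.

Lemma shifted_additive_mulrn (V : zmodType) (f : nat -> V) (p : nat) :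
  (forall i j, f (i + j + p)%N = f i + f j) -> forall j, f j *+ p = f 0%N *+ (p + j).
Proof.
move=> fD.
have fS j : f j.+1 = f j + (f 1%N - f 0%N).
  by apply: (addIr (f 0%N)); rewrite -addrA subrK -!fD addn0 addn1.
have f_lin j : f j = f 0%N + (f 1%N - f 0%N) *+ j.
  by elim: j => [|j IH]; rewrite ?mulr0n ?addr0 // fS IH mulrSr -addrA.
have f0 : f 0%N = (f 1%N - f 0%N) *+ p.
  by apply: (addrI (f 0%N)); rewrite -f_lin -fD.
by move=> j; rewrite f_lin mulrnDl -mulrnA mulnC mulrnA -f0 -mulrnDr.
Qed.

Lemma least_witness_choice (P : nat -> nat -> bool) :
  exists (I : pred nat) (k : nat -> nat), forall l,
    if I l then P l (k l) /\ (forall t, (t < k l)%N -> ~~ P l t)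
    else forall t, ~~ P l t.
Proof.
exists (fun l => if excluded_middle_informative (exists t, P l t) then true else false).
exists (fun l => if excluded_middle_informative (exists t, P l t) is left ex
                 then ex_minn ex else 0%N).
move=> l; case: excluded_middle_informative => [ex | no_ex].
  by case: ex_minnP => k Pk k_min; split=> // t; apply: contraTN; rewrite -leqNgt; apply: k_min.
by move=> t; apply/negP => Pt; apply: no_ex; exists t.
Qed.

Lemma nu_leq (zero : bool) (i k : nat) : (nu zero 0 <= i + k)%N -> (nu zero i <= k)%N.
Proof. by case: i => [|i]; rewrite /nu ?andbF. Qed.

Lemma harmonic_inv (F : fieldType) (x y z : F) : x != 0 -> y != 0 ->
  x * y = (x + y) * z -> z^-1 = x^-1 + y^-1.
Proof.
move=> x0 y0 e; have := mulf_neq0 x0 y0; rewrite e mulf_eq0 negb_or => /andP[xy0 z0].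
have -> : x^-1 + y^-1 = (x + y) / (x * y) by field; rewrite x0 y0.
by rewrite e; field; rewrite xy0 z0.
Qed.

Definition rb_coef_eq (F : fieldType) (zero : bool) (r c : nat) (a : nat -> nat -> F) :=
  forall n m l t, (nu zero 0 <= n + m)%N -> (nu zero 0 <= l + t)%N ->
  a n m * a l t =
    a n m * a l (t + (m + r * n + c))%N + a l t * a n (m + (t + r * l + c))%N.

Section Rows.

Variables (F : fieldType) (zero : bool) (r c : nat) (a : nat -> nat -> F).
Hypothesis rbE : rb_coef_eq zero r c a.

Local Notation adm l t := (nu zero 0 <= l + t)%N.

Definition row_progression (l k D : nat) :=
  forall t, adm l t -> (a l t != 0 <-> exists s, t = (k + D * s)%N).

Lemma row_coef_eq l t t' : adm l t -> adm l t' ->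
  a l t' * a l t = (a l t' + a l t) * a l (t + t' + (r * l + c))%N.
Proof.
move=> Dt Dt'; rewrite (rbE Dt' Dt) mulrDl.
by congr (_ * a l _ + _ * a l _); lia.
Qed.

Lemma row_coef_neq0 l t t' : adm l t -> adm l t' ->
  a l t != 0 -> a l t' != 0 -> a l (t + t' + (r * l + c))%N != 0.
Proof.
move=> Dt Dt' at0 at'0; have := mulf_neq0 at'0 at0.
by rewrite row_coef_eq // mulf_eq0 negb_or => /andP[].
Qed.

Lemma row_coef_eq0 l t t' : adm l t -> adm l t' ->
  a l t = 0 -> a l t' != 0 -> a l (t + t' + (r * l + c))%N = 0.
Proof.
move=> Dt Dt' at0 at'0; have /esym/eqP := row_coef_eq Dt Dt'.
by rewrite at0 mulr0 addr0 mulf_eq0 (negbTE at'0) => /eqP.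
Qed.

Lemma row_coef_neq0_transfer l t u k k' :
  adm l t -> adm l u -> adm l k -> adm l k' -> a l k != 0 -> a l k' != 0 ->
  (t + k = u + k')%N -> (a l t != 0) = (a l u != 0).
Proof.
suff imp t1 t2 k1 k2 : adm l t1 -> adm l t2 -> adm l k1 -> adm l k2 ->
    a l k1 != 0 -> a l k2 != 0 -> (t1 + k1 = t2 + k2)%N -> a l t1 != 0 -> a l t2 != 0.
  move=> Dt Du Dk Dk' ak ak' e; apply/idP/idP.
    exact: imp Dt Du Dk Dk' ak ak' e.
  exact: imp Du Dt Dk' Dk ak' ak (esym e).
move=> Dt1 Dt2 Dk1 Dk2 ak1 ak2 e at1; apply/eqP => at2.
have := row_coef_eq0 Dt2 Dk2 at2 ak2; rewrite -e.
by apply/eqP; exact: row_coef_neq0.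
Qed.

Lemma row_ydeg_gt0 l k : adm l k -> a l k != 0 -> (0 < k + (r * l + c))%N.
Proof.
move=> Dk ak; rewrite lt0n; apply: contra ak => /eqP q0.
have := row_coef_eq Dk Dk; rewrite (_ : k + k + _ = k)%N; last by lia.
by rewrite mulrDl => /eqP; rewrite addrC -subr_eq subrr eq_sym mulf_eq0 orbb.
Qed.

Lemma row_progression_exists l k : adm l k -> a l k != 0 ->
  (forall t, adm l t -> (t < k)%N -> a l t = 0) ->
  exists2 D, (0 < D)%N & row_progression l k D.
Proof.
move=> Dk ak k_min.
have next_nz : exists t, (k < t)%N && (a l t != 0).
  exists (k + k + (r * l + c))%N; rewrite row_coef_neq0 // andbT.
  by have := row_ydeg_gt0 Dk ak; lia.
case: (ex_minnP next_nz) => k2 /andP[kk2 ak2] k2_min.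
have Dk2 : adm l k2 by lia.
(* The step is the gap between the first two nonzero entries; past k2, entries t and
   t - (k2 - k) vanish together by transfer against k and k2. *)
exists (k2 - k)%N; first by lia.
elim/ltn_ind => t IH Dt; case: (ltnP t k2) => [tk2 | k2t].
  split=> [at0 | [[|s] e]].
  - have tk : (t <= k)%N.
      by rewrite leqNgt; apply: contraTN tk2 => kt; rewrite -leqNgt k2_min // kt.
    have kt : (k <= t)%N by rewrite leqNgt; apply: contra at0 => tk'; rewrite k_min.
    by exists 0%N; lia.
  - by rewrite e muln0 addn0.
  - by rewrite mulnS in e; lia.
have Du : adm l (t - (k2 - k)) by lia.
rewrite (row_coef_neq0_transfer Dt Du Dk Dk2 ak ak2); last by lia.
rewrite IH //; last by lia.
split=> [[s e] | [[|s] e]].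
- by exists s.+1; rewrite mulnS; lia.
- by lia.
- by exists s; rewrite mulnS in e; lia.
Qed.

Lemma row_progression_neq0 l k D s : row_progression l k D -> adm l k ->
  a l (k + D * s)%N != 0.
Proof. by move=> prog Dk; apply/prog; [lia | exists s]. Qed.

Lemma row_progression_dvd l k D : row_progression l k D -> adm l k ->
  (D %| k + (r * l + c))%N.
Proof.
move=> prog Dk; have := row_progression_neq0 0 prog Dk; rewrite muln0 addn0 => ak.
have [|s e] := (prog _ _).1 (row_coef_neq0 Dk Dk ak ak); first by lia.
by rewrite (_ : k + _ = D * s)%N ?dvdn_mulr //; lia.
Qed.

Lemma row_progression_start_lt l k D : row_progression l k D -> adm l k -> (0 < D)%N ->
  (k < D + nu zero 0)%N.
Proof.
move=> prog Dk Dpos; rewrite ltnNge; apply/negP => Dk_le.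
have Du : adm l (k - D) by lia.
have au : a l (k - D) = 0 by apply/eqP; apply: contraT => /(prog _ Du)[s e]; lia.
have Dk1 : adm l (k + D * 1) by lia.
have := row_progression_neq0 0 prog Dk; rewrite muln0 addn0 => ak.
have e : (k - D + (k + D * 1) = k + k)%N by lia.
have := row_coef_neq0_transfer Du Dk Dk1 Dk (row_progression_neq0 1 prog Dk) ak e.
by rewrite au eqxx ak.
Qed.

Lemma row_progression_dvd_ydeg l k D n m : row_progression l k D -> adm l k -> (0 < D)%N ->
  adm n m -> a n m != 0 -> (D %| m + r * n + c)%N.
Proof.
move=> prog Dk Dpos Dnm anm; set N := (m + r * n + c)%N.
apply: contraT => ndvd.
(* t = k + (D - 1) N is off the progression but t + N = k + D N is on it. *)
have DN : ((D - 1) * N + N = D * N)%N by rewrite -[X in (_ + X)%N]mul1n -mulnDl subnK.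
have Dt : adm l (k + (D - 1) * N) by rewrite addnA (leq_trans Dk) ?leq_addr.
have at0 : a l (k + (D - 1) * N) = 0.
  apply/eqP; apply: contraNT ndvd => /(prog _ Dt)[s e].
  by rewrite -(dvdn_addr _ (dvdn_mulr s (dvdnn D))) -(addnI e) DN dvdn_mulr.
have atN : a l (k + (D - 1) * N + N) != 0.
  by rewrite -addnA DN row_progression_neq0.
have /esym/eqP := rbE Dnm Dt.
by rewrite at0 mulr0 mul0r addr0 mulf_eq0 (negbTE anm) (negbTE atN).
Qed.

Lemma row_progression_step_unique l k D l' k' D' :
  row_progression l k D -> row_progression l' k' D' -> adm l k -> adm l' k' ->
  (0 < D)%N -> (0 < D')%N -> D = D'.
Proof.
suff step_dvd l1 k1 D1 l2 k2 D2 : row_progression l1 k1 D1 -> row_progression l2 k2 D2 ->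
    adm l1 k1 -> adm l2 k2 -> (0 < D1)%N -> (D1 %| D2)%N.
  move=> prog prog' Dk Dk' Dpos D'pos; apply/eqP; rewrite eqn_dvd.
  by rewrite (step_dvd _ _ _ _ _ _ prog prog') ?(step_dvd _ _ _ _ _ _ prog' prog).
move=> prog1 prog2 Dk1 Dk2 D1pos.
have dvd_ydeg s : (D1 %| k2 + D2 * s + r * l2 + c)%N.
  apply: row_progression_dvd_ydeg prog1 Dk1 D1pos _ (row_progression_neq0 s prog2 Dk2).
  by lia.
have := dvd_ydeg 1%N; rewrite (_ : k2 + D2 * 1 + _ + _ = k2 + D2 * 0 + r * l2 + c + D2)%N.
  by rewrite dvdn_addr // dvd_ydeg.
by lia.
Qed.

Lemma row_progression_coef (charF0 : [pchar F] =i pred0) l k D s :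
  row_progression l k D -> adm l k -> (0 < D)%N ->
  a l (k + D * s)%N = (k + r * l + c)%:R * a l k / ((k + r * l + c)%:R + D%:R * s%:R).
Proof.
move=> prog Dk Dpos.
have natr_neq0 n : (0 < n)%N -> (n%:R : F) != 0.
  by rewrite ((pcharf0P F).1 charF0) -lt0n.
have [p hp] := dvdnP (row_progression_dvd prog Dk).
have ak0 := row_progression_neq0 0 prog Dk; rewrite muln0 addn0 in ak0.
have ppos : (0 < p)%N by have := row_ydeg_gt0 Dk ak0; rewrite hp muln_gt0 => /andP[].
pose psi j := (a l (k + D * j)%N)^-1.
have psiD i j : psi (i + j + p)%N = psi i + psi j.
  apply: harmonic_inv; rewrite ?row_progression_neq0 //.
  rewrite row_coef_eq; try lia.
  by congr (_ * a l _); rewrite !mulnDr; lia.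
have psi_s := shifted_additive_mulrn psiD s.
have -> : a l k = (psi 0%N)^-1 by rewrite invrK muln0 addn0.
have -> : a l (k + D * s)%N = (psi s)^-1 by rewrite invrK.
have psi0 : psi 0%N != 0 by rewrite invr_eq0 muln0 addn0.
rewrite -addnA hp.
have -> : psi s = psi 0%N * (p + s)%:R / p%:R.
  apply: (mulIf (natr_neq0 _ ppos)).
  by rewrite mulfVK ?natr_neq0 // !mulr_natr psi_s.
clearbody psi; field.
by rewrite -!natrM -!natrD !natr_neq0 ?psi0 ?addn_gt0 ?muln_gt0 ?ppos ?Dpos.
Qed.

Lemma common_row_progression (I : pred nat) (k : nat -> nat) :
  (forall l, I l ->
     [/\ adm l (k l), a l (k l) != 0 & forall t, adm l t -> (t < k l)%N -> a l t = 0]) ->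
  exists2 D, (0 < D)%N & forall l, I l -> row_progression l (k l) D.
Proof.
move=> Ik; have [[l0 Il0] | noI] := classic (exists l, I l); last first.
  by exists 1%N => // l Il; case: noI; exists l.
have [Dk0 ak0 k0_min] := Ik l0 Il0.
have [D Dpos prog0] := row_progression_exists Dk0 ak0 k0_min.
exists D => // l Il; have [Dk ak k_min] := Ik l Il.
have [D' D'pos prog] := row_progression_exists Dk ak k_min.
by rewrite -(row_progression_step_unique prog prog0 Dk Dk0 D'pos Dpos).
Qed.

Lemma coef_eq0_of_r0_c0 : zero = false -> r = 0%N -> c = 0%N -> forall n m, a n m = 0.
Proof.
move=> z0 r0 c0 n m; have adm_all l t : adm l t by rewrite z0.
have an0 : a n 0%N = 0.
  case: (eqVneq (a n 0%N) 0) => // an0.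
  by have := row_ydeg_gt0 (adm_all n 0%N) an0; rewrite r0 c0.
have /eqP := rbE (adm_all n m) (adm_all n 0%N).
by rewrite an0 mulr0 mul0r addr0 r0 c0 mul0n !addn0 add0n eq_sym mulf_eq0 orbb => /eqP.
Qed.

End Rows.

Lemma xyM (F : fieldType) n m l t : xy F n m * xy F l t = xy F (n + l) (m + t).
Proof. by rewrite /xy mulrACA -exprD -polyCM -exprD. Qed.

Lemma xy0_scale_inj (F : fieldType) (E : nat) (b b' : F) :
  b%:P%:P * xy F 0 E = b'%:P%:P * xy F 0 E -> b = b'.
Proof.
have xy0_neq0 : xy F 0 E != 0 by rewrite /xy mul1r polyC_eq0 expf_neq0 ?polyX_eq0.
by move/(mulIf xy0_neq0)/polyC_inj/polyC_inj.
Qed.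

Lemma inA_xy (F : fieldType) zero n m : (nu zero 0 <= n + m)%N -> inA zero (xy F n m).
Proof.
rewrite /inA /nu /in_F0 /xy; case: zero => //= Dnm.
rewrite mulrC coefCM coefXn; case: n Dnm => [|n] Dnm /=; last by rewrite mulr0 coef0.
by rewrite mulr1 coefXn; case: m Dnm.
Qed.

Lemma rb_coef_eq_of_RB (F : fieldType) (zero : bool) (r c : nat)
  (R : {poly {poly F}} -> {poly {poly F}}) (alpha : nat -> nat -> F)
  (R_add : forall p q, R (p + q) = R p + R q)
  (R_scale : forall (a : F) p, R (a%:P *: p) = a%:P *: R p)
  (R_RB : forall a b, inA zero a -> inA zero b -> R a * R b = R (R a * b + a * R b))
  (R_mon : forall n m, (nu zero 0 <= n + m)%N ->
      R (xy F n m) = (alpha n m)%:P%:P * xy F 0 (m + r * n + c)) :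
  rb_coef_eq zero r c alpha.
Proof.
move=> n m l t Dnm Dlt.
set N1 := (m + r * n + c)%N; set N2 := (t + r * l + c)%N.
have lhs : R (xy F n m) * R (xy F l t) = (alpha n m * alpha l t)%:P%:P * xy F 0 (N1 + N2).
  by rewrite !R_mon // mulrACA xyM !polyCM.
have rhs : R (R (xy F n m) * xy F l t + xy F n m * R (xy F l t)) =
    (alpha n m * alpha l (t + N1) + alpha l t * alpha n (m + N2))%:P%:P * xy F 0 (N1 + N2).
  rewrite !R_mon // -mulrA xyM [xy F n m * _]mulrCA xyM add0n addn0.
  rewrite !mul_polyC R_add !R_scale !R_mon; try lia.
  rewrite !mul_polyC !scalerA -!polyCM.
  have e1 : (m + r * n + c + t + r * l + c = N1 + N2)%N by rewrite /N1 /N2; lia.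
  have e2 : (m + (t + r * l + c) + r * n + c = N1 + N2)%N by rewrite /N1 /N2; lia.
  by rewrite e1 e2 [(_ + t)%N]addnC -scalerDl -polyCD.
by apply: (@xy0_scale_inj F (N1 + N2)); rewrite -lhs -rhs R_RB ?inA_xy.
Qed.

Lemma R_eq0_of_monomials (F : fieldType) (R : {poly {poly F}} -> {poly {poly F}})
  (R_add : forall p q, R (p + q) = R p + R q)
  (R_scale : forall (a : F) p, R (a%:P *: p) = a%:P *: R p) :
  (forall n m, R (xy F n m) = 0) -> forall p, R p = 0.
Proof.
move=> R_xy.
have R0 : R 0 = 0 by apply: (addIr (R 0)); rewrite -R_add !add0r.
have R_sum I (s : seq I) (f : I -> {poly {poly F}}) :
    (forall i, R (f i) = 0) -> R (\sum_(i <- s) f i) = 0.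
  by move=> Rf; apply: (big_ind (fun q => R q = 0)) => // q q' Rq Rq'; rewrite R_add Rq Rq' addr0.
move=> p; rewrite -[p]coefK poly_def; apply: (R_sum) => i.
rewrite -[p`_i]coefK poly_def scaler_suml; apply: R_sum => j.
have -> : p`_i`_j *: 'X^j *: 'X^i = (p`_i`_j)%:P *: xy F i j.
  by rewrite /xy -!mul_polyC polyCM -mulrA [_ * 'X^i]mulrC.
by rewrite R_scale R_xy scaler0.
Qed.

Unset Implicit Arguments.

Theorem theorem4p1 (F : fieldType) (charF0 : [pchar F] =i pred0)
  (zero : bool) (r c : nat) (hc : (nu zero 0 <= c)%N)
  (R : {poly {poly F}} -> {poly {poly F}}) (alpha : nat -> nat -> F)
  (R_add : forall p q, R (p + q) = R p + R q)
  (R_scale : forall (a : F) p, R (a%:P *: p) = a%:P *: R p)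
  (R_RB : forall a b, inA zero a -> inA zero b ->
      R a * R b = R (R a * b + a * R b))
  (R_mon : forall n m, (nu zero 0 <= n + m)%N ->
      R (xy F n m) = (alpha n m)%:P%:P * xy F 0 (m + r * n + c)) :
  ((r = 0%N /\ c = 0%N) ->
     (if ~~ zero then forall p, R p = 0
      else exists k : nat, (0 < k)%N /\ alpha 0%N k != 0 /\
        forall n m, (1 <= n + m)%N ->
          alpha n m = if [&& n == 0%N, (0 < m)%N & (k %| m)%N]
                      then alpha 0%N k / (m %/ k)%:R else 0))
  /\
  ((0 < r + c)%N ->
     exists (I : pred nat) (Delta : int) (k : nat -> nat),
       (forall i, I i ->
          [/\ alpha i (k i) != 0, (nu zero i <= k i)%N,
              (k i)%:Z - (nu zero 0)%:Z < Delta,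
              Delta <= (k i + r * i + c)%N%:Z
            & (Delta %| (k i + r * i + c)%N%:Z)%Z]) /\
       (forall l t, (nu zero 0 <= l + t)%N ->
          (forall s : nat, I l -> t%:Z = (k l)%:Z + Delta * s%:Z ->
             alpha l t = (k l + r * l + c)%:R * alpha l (k l)
                         / ((k l + r * l + c)%:R + Delta%:~R * s%:R)) /\
          (~ (I l /\ exists s : nat, t%:Z = (k l)%:Z + Delta * s%:Z) ->
             alpha l t = 0))).
Proof.
have rbE := rb_coef_eq_of_RB R_add R_scale R_RB R_mon.
split=> [[r0 c0] | _].
  (* On F_0[x,y] the hypothesis c >= nu(0) = 1 rules out r = c = 0. *)
  have zero_false : zero = false by move: hc; rewrite c0; case: (zero).
  rewrite zero_false; apply: R_eq0_of_monomials => // n m.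
  by rewrite R_mon ?zero_false // (coef_eq0_of_r0_c0 rbE zero_false r0 c0) mul0r.
pose P l t := (nu zero 0 <= l + t)%N && (alpha l t != 0).
have [I [k Ik]] := least_witness_choice P.
have vanish l t : (nu zero 0 <= l + t)%N -> ~~ P l t -> alpha l t = 0.
  by rewrite /P => ->; rewrite negbK => /eqP.
have first_nz l : I l -> [/\ (nu zero 0 <= l + k l)%N, alpha l (k l) != 0
    & forall t, (nu zero 0 <= l + t)%N -> (t < k l)%N -> alpha l t = 0].
  move=> Il; move: (Ik l); rewrite Il => -[/andP[Dk ak] k_min].
  by split=> // t Dt /k_min; apply: vanish.
have [D Dpos prog] := common_row_progression rbE first_nz.
exists I, D%:Z, k; split=> [i Ii | l t Dt].
  have [Dk ak _] := first_nz i Ii.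
  have dvd := row_progression_dvd rbE (prog i Ii) Dk.
  have lt := row_progression_start_lt rbE (prog i Ii) Dk Dpos.
  have gt0 := row_ydeg_gt0 rbE Dk ak.
  split=> //; first exact: nu_leq; first by lia.
    by rewrite lez_nat -addnA dvdn_leq.
  by rewrite /dvdz /= -addnA.
split=> [s Il /eqP | not_prog].
  rewrite -PoszM -PoszD eqz_nat => /eqP ->; have [Dk _ _] := first_nz l Il.
  by rewrite -pmulrn (row_progression_coef rbE charF0 s (prog l Il) Dk Dpos).
case Il: (I l); last by move: (Ik l); rewrite Il => /(_ t); apply: vanish.
have [Dk _ _] := first_nz l Il.
apply/eqP; apply: contraT => /(prog l Il t Dt)[s e]; case: not_prog; split=> //.
by exists s; rewrite e PoszD PoszM.
Qed.
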